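(* For all parameters $u,v,w$ with $v\neq0$ and every $\alpha$, $$(x\oplus_{u,1}(y\oplus_{v,w}z))_{s,t}^{(\alpha)}=\mathrm{e}(z\mathrm{T}_{v^{-1}}\mathbf{D}_{s,t},w)\big\{(x\oplus_{u,v}y)_{s,t}^{(\alpha)}\big\},$$ where on the right the operator acts termwise on the variable $y$ and the identity is one of formal series.
   Context: Let $s,t$ be nonzero reals with $s^2+4t\neq0$, $\varphi=\frac{s+\sqrt{s^2+4t}}{2}$, $\varphi'=\frac{s-\sqrt{s^2+4t}}{2}$, $\{\beta\}_{s,t}=\frac{\varphi^\beta-\varphi'^\beta}{\varphi-\varphi'}$, $\{n\}_{s,t}!=\{1\}_{s,t}\cdots\{n\}_{s,t}$ ($\{0\}_{s,t}!=1$), $\left\{{\alpha\atop k}\right\}_{s,t}=\frac{\{\alpha\}_{s,t}\cdots\{\alpha-k+1\}_{s,t}}{\{k\}_{s,t}!}$, $\binom{\beta}{2}=\beta(\beta-1)/2$. The deformed binomial series is $(x\oplus_{u,v}y)_{s,t}^{(\alpha)}=\sum_{n\geq0}\left\{{\alpha\atop n}\right\}_{s,t}u^{\binom{\alpha-n}{2}}v^{\binom{n}{2}}x^{\alpha-n}y^n$ (a polynomial when $\alpha\in\mathbb N$). The deformed trinomial series is $(x\oplus_{u,1}(y\oplus_{v,w}z))_{s,t}^{(\alpha)}=\sum_{k\ge0}\left\{{\alpha\atop k}\right\}_{s,t}u^{\binom{\alpha-k}{2}}x^{\alpha-k}(y\oplus_{v,w}z)_{s,t}^{(k)}$. The $(s,t)$-derivative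 acts on powers of $y$ by $\mathbf{D}_{s,t}y^m=\{m\}_{s,t}y^{m-1}$, $\mathrm{T}_af(y)=f(ay)$, and $\mathrm{e}(z\mathrm{T}_{v^{-1}}\mathbf{D}_{s,t},w)=\sum_{n\ge0}w^{\binom{n}{2}}\frac{z^n}{\{n\}_{s,t}!}(\mathrm{T}_{v^{-1}}\mathbf{D}_{s,t})^n$. *)

From Stdlib Require Import Reals Lra Arith.
From Coquelicot Require Import Coquelicot.
Open Scope R_scope.

(* Principal argument of a complex number, in (-PI, PI]; 0 for z = 0. *)
Definition Carg (z : C) : R :=
  let a := fst z in let b := snd z in
  if Rlt_dec 0 a then atan (b / a)
  else if Rlt_dec a 0 then
         (if Rle_dec 0 b then atan (b / a) + PI else atan (b / a) - PI)
  else if Rlt_dec 0 b then PI / 2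
  else if Rlt_dec b 0 then - (PI / 2) else 0.

(* Principal complex power z^beta for a real exponent beta:
   |z|^beta * (cos (beta arg z) + i sin (beta arg z)); convention 0^0 = 1,
   0^beta = 0 otherwise. *)
Definition cpow (z : C) (beta : R) : C :=
  if Ceq_dec z 0%C then (if Req_EM_T beta 0 then 1%C else 0%C)
  else Cmult (RtoC (Rpower (Cmod z) beta))
             (cos (beta * Carg z), sin (beta * Carg z)).

Definition csqrtR (d : R) : C :=
  if Rle_dec 0 d then RtoC (sqrt d) else (0, sqrt (- d)).

Definition phi (s t : R) : C := Cdiv (Cplus (RtoC s) (csqrtR (s ^ 2 + 4 * t))) 2%C.
Definition phi' (s t : R) : C := Cdiv (Cminus (RtoC s) (csqrtR (s ^ 2 + 4 * t))) 2%C.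

Definition stnum (s t beta : R) : C :=
  Cdiv (Cminus (cpow (phi s t) beta) (cpow (phi' s t) beta))
       (Cminus (phi s t) (phi' s t)).

Fixpoint Csum (n : nat) (f : nat -> C) : C :=
  match n with O => 0%C | S m => Cplus (Csum m f) (f m) end.
Fixpoint Cprod (n : nat) (f : nat -> C) : C :=
  match n with O => 1%C | S m => Cmult (Cprod m f) (f m) end.

Definition stfact (s t : R) (n : nat) : C :=
  Cprod n (fun i => stnum s t (INR (S i))).

Definition stbinom (s t alpha : R) (k : nat) : C :=
  Cdiv (Cprod k (fun j => stnum s t (alpha - INR j))) (stfact s t k).

Definition binom2R (beta : R) : R := beta * (beta - 1) / 2.
Definition binom2 (n : nat) : nat := Nat.div (n * (n - 1)) 2.

(* Formal series in x, y, z relative to a fixed exponent alpha: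
   f i j l is the coefficient of x^(alpha - i) y^j z^l. *)
Definition ser := nat -> nat -> nat -> C.

(* (x (+)_{u,v} y)^(alpha)_{s,t}
   = sum_n {alpha choose n} u^binom(alpha-n,2) v^binom(n,2) x^(alpha-n) y^n,
   viewed as a series in x, y, z (no z). *)
Definition binser (s t u v alpha : R) : ser :=
  fun i j l =>
    if (Nat.eqb l 0 && Nat.eqb i j)%bool then
      Cmult (Cmult (stbinom s t alpha i) (cpow (RtoC u) (binom2R (alpha - INR i))))
            (RtoC (v ^ binom2 i))
    else 0%C.

(* coefficient of y^j z^l in the polynomial (y (+)_{v,w} z)^(k)_{s,t}
   = sum_{n} {k choose n} v^binom(k-n,2) w^binom(n,2) y^(k-n) z^n
   (the terms with n > k vanish since {k choose n} = 0). *)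
Definition ypoly (s t v w : R) (k j l : nat) : C :=
  if Nat.eqb (j + l) k then
    Cmult (Cmult (stbinom s t (INR k) l) (RtoC (v ^ binom2 j))) (RtoC (w ^ binom2 l))
  else 0%C.

(* (x (+)_{u,1} (y (+)_{v,w} z))^(alpha)_{s,t}
   = sum_k {alpha choose k} u^binom(alpha-k,2) x^(alpha-k) (y (+)_{v,w} z)^(k) *)
Definition triser (s t u v w alpha : R) : ser :=
  fun i j l =>
    Cmult (Cmult (stbinom s t alpha i) (cpow (RtoC u) (binom2R (alpha - INR i))))
          (ypoly s t v w i j l).

(* (s,t)-derivative in y:  D y^m = {m} y^(m-1), termwise *)
Definition Dy (s t : R) (f : ser) : ser :=
  fun i j l => Cmult (stnum s t (INR (S j))) (f i (S j) l).

(* dilation T_a in y: (T_a f)(y) = f(a y), termwise *)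
Definition Ty (a : C) (f : ser) : ser :=
  fun i j l => Cmult (Cpow a j) (f i j l).

(* e(z T_{v^-1} D_{s,t}, w) f
   = sum_n w^binom(n,2) z^n / {n}! (T_{v^-1} D_{s,t})^n f ;
   coefficient of x^(alpha-i) y^j z^l collects the terms n <= l. *)
Definition e_op (s t v w : R) (f : ser) : ser :=
  fun i j l =>
    Csum (S l) (fun n =>
      Cmult (Cdiv (RtoC (w ^ binom2 n)) (stfact s t n))
            (Nat.iter n (fun g => Ty (RtoC (/ v)) (Dy s t g)) f i j (l - n)%nat)).

(* Since (x (+)_{u,v} y)^(alpha)
   contains no z, only the term z^l (T_{1/v} D)^l of the exponential operator
   contributes, and it sends y^(j+l) to prod_{k<l} v^-(j+k) {j+k+1} y^j.  The
   factor prod_{k<l} {j+k+1} / {l}! is the deformed binomial coefficient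
   {j+l choose l}, and v^binom(j+l,2) prod_{k<l} v^-(j+k) = v^binom(j,2), which
   are exactly the coefficients of the deformed trinomial. *)
From Stdlib Require Import Reals.
From Coquelicot Require Import Coquelicot.
From Stdlib Require Import Lia Arith FunctionalExtensionality.
Open Scope R_scope.

Lemma Cprod_ext n f g :
  (forall k, (k < n)%nat -> f k = g k) -> Cprod n f = Cprod n g.
Proof.
  induction n as [|n IHn]; intros Hfg; simpl; auto.
  rewrite IHn, Hfg; [reflexivity | lia | intros; apply Hfg; lia].
Qed.

Lemma Cprod_succ_l n f :
  Cprod (S n) f = Cmult (f O) (Cprod n (fun k => f (S k))).
Proof.
  induction n as [|n IHn]; simpl in *; [ring|].
  rewrite IHn; ring.
Qed.

Lemma Cprod_mult n f g :
  Cprod n (fun k => Cmult (f k) (g k)) = Cmult (Cprod n f) (Cprod n g).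
Proof. induction n as [|n IHn]; simpl; [ring|]. rewrite IHn; ring. Qed.

Lemma Csum_eq0 m (g : nat -> C) :
  (forall n, (n < m)%nat -> g n = 0%C) -> Csum m g = 0%C.
Proof.
  induction m as [|m IHm]; intros Hg; simpl; auto.
  rewrite IHm, Hg; [ring | lia | intros; apply Hg; lia].
Qed.

Lemma Csum_succ_last m (g : nat -> C) :
  (forall n, (n < m)%nat -> g n = 0%C) -> Csum (S m) g = g m.
Proof. intros Hg; cbn [Csum]; rewrite Csum_eq0 by exact Hg; ring. Qed.

Lemma Cprod_falling_rising (f : R -> C) l : forall j,
  Cprod l (fun m => f (INR (j + l) - INR m)) = Cprod l (fun k => f (INR (S (j + k)))).
Proof.
  induction l as [|l IHl]; intros j; [reflexivity|].
  rewrite (Cprod_succ_l l (fun k => f (INR (S (j + k))))); cbn [Cprod].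
  rewrite (Cprod_ext l _ (fun m => f (INR (S j + l) - INR m)))
    by (intros; do 3 f_equal; lia).
  rewrite IHl.
  rewrite (Cprod_ext l _ (fun k => f (INR (S (j + S k)))))
    by (intros; do 2 f_equal; lia).
  replace (INR (j + S l) - INR l) with (INR (S (j + 0))); [ring|].
  rewrite <- minus_INR by lia; f_equal; lia.
Qed.

Lemma stbinom_nat s t j l :
  stbinom s t (INR (j + l)) l = Cdiv (Cprod l (fun k => stnum s t (INR (S (j + k))))) (stfact s t l).
Proof. unfold stbinom; now rewrite (Cprod_falling_rising (stnum s t)). Qed.

Lemma binom2_S n : binom2 (S n) = (binom2 n + n)%nat.
Proof.
  unfold binom2.
  replace (S n * (S n - 1))%nat with (n * (n - 1) + n * 2)%nat
    by (destruct n; simpl; nia).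
  rewrite Nat.div_add by lia; reflexivity.
Qed.

Lemma pow_binom2_shift (v : R) j l : v <> 0 ->
  Cmult (RtoC (v ^ binom2 (j + l))) (Cprod l (fun k => Cpow (RtoC (/ v)) (j + k)))
  = RtoC (v ^ binom2 j).
Proof.
  intros Hv; induction l as [|l IHl].
  - simpl; rewrite Nat.add_0_r; ring.
  - cbn [Cprod]; replace (j + S l)%nat with (S (j + l)) by lia.
    rewrite binom2_S, pow_add, <- RtoC_pow.
    transitivity (Cmult (Cmult (RtoC (v ^ binom2 (j + l)))
        (Cprod l (fun k => Cpow (RtoC (/ v)) (j + k))))
        (RtoC (v ^ (j + l) * (/ v) ^ (j + l)))).
    + rewrite !RtoC_mult, RtoC_pow; ring.
    + rewrite IHl, <- Rpow_mult_distr, Rinv_r, pow1 by exact Hv; ring.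
Qed.

Lemma iter_Ty_Dy s t (a : C) n : forall f i j l,
  Nat.iter n (fun g => Ty a (Dy s t g)) f i j l =
  Cmult (Cprod n (fun k => Cmult (Cpow a (j + k)) (stnum s t (INR (S (j + k))))))
        (f i (j + n)%nat l).
Proof.
  induction n as [|n IHn]; intros f i j l.
  - simpl; rewrite Nat.add_0_r; ring.
  - rewrite Nat.iter_succ_r, IHn; unfold Ty, Dy; cbn [Cprod].
    replace (S (j + n)) with (j + S n)%nat by lia; ring.
Qed.

Lemma e_op_z_free s t v w (f : ser) i j l :
  (forall i j l, l <> O -> f i j l = 0%C) ->
  e_op s t v w f i j l =
  Cmult (Cdiv (RtoC (w ^ binom2 l)) (stfact s t l))
        (Cmult (Cprod l (fun k => Cmult (Cpow (RtoC (/ v)) (j + k)) (stnum s t (INR (S (j + k))))))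
               (f i (j + l)%nat O)).
Proof.
  intros Hf; unfold e_op.
  rewrite Csum_succ_last, iter_Ty_Dy, Nat.sub_diag; [reflexivity|].
  intros n Hn; rewrite iter_Ty_Dy, Hf by lia; ring.
Qed.

Theorem mainTheorem6 (s t u v w alpha : R) :
  s <> 0 -> t <> 0 -> s ^ 2 + 4 * t <> 0 -> v <> 0 ->
  triser s t u v w alpha = e_op s t v w (binser s t u v alpha).
Proof.
  intros _ _ _ Hv.
  apply functional_extensionality; intros i.
  apply functional_extensionality; intros j.
  apply functional_extensionality; intros l.
  rewrite e_op_z_free.
  2:{ intros i' j' l' Hl'; unfold binser.
      now rewrite (proj2 (Nat.eqb_neq l' 0) Hl'). }
  unfold triser, binser, ypoly; cbn [Nat.eqb andb].
  destruct (Nat.eqb_spec i (j + l)) as [->|Hne].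
  - rewrite Nat.eqb_refl, Cprod_mult, stbinom_nat, <- (pow_binom2_shift v j l Hv).
    unfold Cdiv; ring.
  - rewrite (proj2 (Nat.eqb_neq (j + l) i)) by lia; ring.
Qed.
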